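(* Let $m\ge1$ be an integer, let $y\in(1,H]$ for some real $H>1$, and let $\theta_1,\ldots,\theta_m\in[0,\pi]$. Let \[ P(t)=(t-y)(t-y^{-1})\prod_{k=1}^m(t-e^{i\theta_k})(t-e^{-i\theta_k})=t^{2m+2}+a_1t^{2m+1}+\cdots+a_{m+1}t^{m+1}+\cdots+a_1t+1, \] and for indices $j>m+1$ write $a_j:=a_{2m+2-j}$ (so that $a_j$ is the coefficient of both $t^{j}$ and $t^{2m+2-j}$). Put $z_0:=y+y^{-1}$ and $z_k:=2\cos\theta_k$ for $1\le k\le m$. Then for $1\le i\le\lfloor m/2\rfloor+1$, \[ a_{2i-1}=-\sum_{j=0}^{i-1}\binom{m-2j}{i-j-1}\sum_{0\le k_1<\cdots<k_{2j+1}\le m}\ \prod_{s=1}^{2j+1}z_{k_s},\qquad a_{2i}=\sum_{j=0}^{i}\binom{m-2j+1}{i-j}\sum_{0\le k_1<\cdots<k_{2j}\le m}\ \prod_{s=1}^{2j}z_{k_s}. \] *)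

From HB Require Import structures.
From mathcomp Require Import all_boot all_order all_algebra.
From mathcomp Require Import reals trigo.
From mathcomp Require Import complex.
Set Implicit Arguments. Unset Strict Implicit. Unset Printing Implicit Defensive.
Import Order.TTheory GRing.Theory Num.Theory.
Local Open Scope ring_scope.
Local Open Scope complex_scope.

Definition expi (R : realType) (th : R) : R[i] := (cos th) +i* (sin th).

Definition Ppoly (R : realType) (m : nat) (y : R) (th : nat -> R) : {poly R[i]} :=
  ('X - (y%:C)%:P) * ('X - ((y^-1)%:C)%:P) *
  \prod_(1 <= k < m.+1) (('X - (expi (th k))%:P) * ('X - (expi (- th k))%:P)).

Definition acoef (R : realType) (m : nat) (y : R) (th : nat -> R) (j : nat) : R[i] :=
  if (j <= m.+1)%N then (Ppoly m y th)`_(2 * m + 2 - j)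
  else (Ppoly m y th)`_(2 * m + 2 - (2 * m + 2 - j)).

Definition zval (R : realType) (y : R) (th : nat -> R) (k : nat) : R :=
  if k == 0%N then y + y^-1 else 2 * cos (th k).

Definition esumz (R : realType) (m : nat) (y : R) (th : nat -> R) (r : nat) : R :=
  \sum_(S : {set 'I_m.+1} | #|S| == r) \prod_(k in S) zval y th k.

From HB Require Import structures.
From mathcomp Require Import all_boot all_order all_algebra.
From mathcomp Require Import reals trigo.
From mathcomp Require Import complex.
From mathcomp Require Import ring zify.
Import Order.TTheory GRing.Theory Num.Theory.
Local Open Scope ring_scope.
Local Open Scope complex_scope.
Set Implicit Arguments. Unset Strict Implicit. Unset Printing Implicit Defensive.

(* The two factors belonging to y, and the two belonging to each theta_k, multiply to the
   palindromic quadratics t^2 - z_k t + 1, because y y^-1 = 1 and e^(i th) e^(-i th) = 1.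
   Expanding the product of the t^2 + 1 - z_k t gives
     P(t) = sum_r (-1)^r e_r t^r (t^2 + 1)^(m+1-r),
   e_r being the elementary symmetric functions of z_0, ..., z_m, so the coefficient of t^n
   is the sum of (-1)^r e_r C(m+1-r, (n-r)/2) over the r <= n of the parity of n.
   Since a_j is read off t^(2m+2-j), the symmetry C(N, k) = C(N, N-k) (the palindromy of P)
   finally brings the binomials into the stated form. *)

Lemma sum_nat_trunc (V : nmodType) (a b : nat) (F : nat -> V) :
  (forall r, (minn a b <= r)%N -> F r = 0) ->
  \sum_(0 <= r < a) F r = \sum_(0 <= r < b) F r.
Proof.
move=> F0; suff trunc c : (minn a b <= c)%N ->
    \sum_(0 <= r < c) F r = \sum_(0 <= r < minn a b) F r.
  by rewrite !trunc ?geq_minl ?geq_minr.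
move=> le_c; rewrite (big_cat_nat (leq0n _) le_c) /= [X in _ + X]big1_seq ?addr0 //.
by move=> r /andP[_]; rewrite mem_index_iota => /andP[/F0].
Qed.

Lemma sum_nat_even_odd (V : nmodType) (N : nat) (F : nat -> V) :
  \sum_(0 <= r < 2 * N) F r = \sum_(0 <= j < N) (F (2 * j)%N + F (2 * j + 1)%N).
Proof.
elim: N => [|N IH]; first by rewrite !big_geq.
by rewrite [RHS]big_nat_recr //= -IH mulnSr addn2 !big_nat_recr //= addn1 addrA.
Qed.

Lemma sum_bin_reflect (R : nzSemiRingType) (N a b : nat) (G : nat -> R) :
  (a + b = N)%N -> (forall j, (N < 2 * j)%N -> G j = 0) ->
  \sum_(0 <= j < a.+1) 'C(N - 2 * j, a - j)%:R * G j =
  \sum_(0 <= j < b.+1) 'C(N - 2 * j, b - j)%:R * G j.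
Proof.
move=> def_N G0; wlog le_ba : a b def_N / (b <= a)%N => [hwlog|].
  by case: (leqP b a) => [|/ltnW] ?; [|symmetry]; apply: hwlog; lia.
rewrite (big_cat_nat (leq0n _) (_ : b.+1 <= a.+1)%N) //=.
rewrite [X in _ + X]big_nat_cond [X in _ + X]big1 => [|j /andP[/andP[lt_bj _] _]].
  rewrite addr0; apply: eq_big_nat => j /andP[_ le_jb].
  have [/G0 ->|le_2jN] := ltnP N (2 * j); first by rewrite !mulr0.
  rewrite -bin_sub; last by lia.
  by have -> : (N - 2 * j - (a - j) = b - j)%N by lia.
have [/G0 ->|le_2jN] := ltnP N (2 * j); first by rewrite mulr0.
by rewrite bin_small ?mul0r //; lia.
Qed.

Section ElementarySymmetric.
Variables (R : comNzRingType) (I : finType).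
Implicit Types (c : I -> R) (r : nat).

Definition elem_sym c r : R := \sum_(S : {set I} | #|S| == r) \prod_(i in S) c i.

Lemma elem_sym_eq0 c r : (#|I| < r)%N -> elem_sym c r = 0.
Proof.
move=> lt_Ir; rewrite /elem_sym big_pred0 // => S.
by rewrite ltn_eqF // (leq_ltn_trans (max_card _)).
Qed.

Lemma elem_symN c r : elem_sym (fun i => - c i) r = (-1) ^+ r * elem_sym c r.
Proof.
by rewrite /elem_sym mulr_sumr; apply: eq_bigr => S /eqP <-; rewrite prodrN.
Qed.

Lemma prod_add_elem_sym (a b : R) c :
  \prod_i (a + c i * b) =
  \sum_(r < #|I|.+1) elem_sym c r * (b ^+ r * a ^+ (#|I| - r)).
Proof.
under eq_bigr do rewrite addrC.
rewrite bigA_distr (partition_big (fun S : {set I} => inord #|S| : 'I_#|I|.+1) xpredT) //=.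
apply: eq_bigr => r _; rewrite /elem_sym mulr_suml; apply: eq_big => [S|S /eqP <-].
  by rewrite -val_eqE /= inordK // ltnS max_card.
rewrite inordK ?ltnS ?max_card // big_if /= prodrMr !prodr_const -mulrA.
by rewrite -(cardC S) addKn.
Qed.

End ElementarySymmetric.

Lemma rmorph_elem_sym (R S : comNzRingType) (I : finType) (f : {rmorphism R -> S})
    (c : I -> R) (r : nat) :
  f (elem_sym c r) = elem_sym (f \o c) r.
Proof. by rewrite rmorph_sum; apply: eq_bigr => T _; rewrite rmorph_prod. Qed.

Section CoefficientsX2add1.
Variable R : comNzRingType.

Lemma coef_Xadd1_exp (k i : nat) : (('X + 1) ^+ k : {poly R})`_i = 'C(k, i)%:R.
Proof.
rewrite exprD1n coef_sum; under eq_bigr do rewrite coefMn coefXn mulrnAC mulrb eq_sym.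
rewrite -big_mkcond /= (big_ord1_eq _ (fun j => 'C(k, j)%:R)).
by case: ltnP => // lt_ki; rewrite bin_small.
Qed.

Lemma coef_X2add1_exp (k d : nat) :
  (('X^2 + 1) ^+ k : {poly R})`_d = if odd d then 0 else 'C(k, d./2)%:R.
Proof.
have -> : ('X^2 + 1) ^+ k = ('X + 1) ^+ k \Po 'X^2 :> {poly R}.
  by rewrite rmorphXn rmorphD /= comp_polyX rmorph1.
by rewrite coef_comp_poly_Xn // dvdn2 divn2 coef_Xadd1_exp; case: odd.
Qed.

Lemma coef_XnM_X2add1_exp (r k n : nat) :
  ('X^r * ('X^2 + 1) ^+ k : {poly R})`_n =
  if (r <= n)%N && (odd r == odd n) then 'C(k, (n - r)./2)%:R else 0.
Proof.
rewrite coefXnM coef_X2add1_exp ltnNge; case: leqP => //= le_rn.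
by rewrite oddB //; case: (odd n); case: (odd r).
Qed.

Lemma coef_sum_XnM_X2add1_exp (e : nat -> R) (N c : nat) (b : bool) :
  (forall r, (N < r)%N -> e r = 0) ->
  (\sum_(0 <= r < N.+1) e r *: ('X^r * ('X^2 + 1) ^+ (N - r)))`_(2 * c + b) =
  \sum_(0 <= j < c.+1) e (2 * j + b)%N *+ 'C(N - (2 * j + b), c - j).
Proof.
move=> e0; rewrite coef_sum (sum_nat_trunc (b := 2 * c.+1)) => [|r].
  rewrite sum_nat_even_odd; apply: eq_big_nat => j /andP[_ lt_jc].
  rewrite !coefZ !coef_XnM_X2add1_exp [odd (2 * j + 1)]oddD [odd (2 * c + b)]oddD !oddM /=.
  case: b => /=; rewrite ?addn0 andbF ?mulr0 ?add0r ?addr0 andbT ifT; try lia.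
    have -> : (2 * c + 1 - (2 * j + 1) = (c - j).*2)%N by lia.
    by rewrite doubleK mulr_natr.
  have -> : (2 * c - 2 * j = (c - j).*2)%N by lia.
  by rewrite doubleK mulr_natr.
rewrite geq_min => /orP[/e0 ->|le_r]; first by rewrite scale0r coef0.
rewrite coefZ coef_XnM_X2add1_exp ifF ?mulr0 //; apply/negbTE/nandP; left; lia.
Qed.

End CoefficientsX2add1.

Lemma mul_XsubC_inv (R : comNzRingType) (a b : R) : a * b = 1 ->
  ('X - a%:P) * ('X - b%:P) = 'X^2 + 1 + (- (a + b))%:P * 'X.
Proof.
move=> ab1; have -> : 1 = a%:P * b%:P :> {poly R} by rewrite -polyCM ab1.
rewrite polyCN polyCD; ring.
Qed.

Lemma mul_expiN (R : realType) (t : R) : expi t * expi (- t) = 1.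
Proof.
by rewrite /expi cosN sinN; simpc; rewrite -!expr2 cos2Dsin2 mulrC addNr.
Qed.

Lemma add_expiN (R : realType) (t : R) : expi t + expi (- t) = (2 * cos t)%:C.
Proof. by rewrite /expi cosN sinN; simpc; rewrite complexr0 mulr_natl mulr2n. Qed.

Section Ppoly.
Variables (R : realType) (m : nat) (y : R) (th : nat -> R).

Lemma esumz_elem_sym r : esumz m y th r = elem_sym (fun k : 'I_m.+1 => zval y th k) r.
Proof. by []. Qed.

Lemma esumz_eq0 r : (m.+1 < r)%N -> esumz m y th r = 0.
Proof. by rewrite esumz_elem_sym => lt_mr; rewrite elem_sym_eq0 ?card_ord. Qed.

Lemma Ppoly_prod : y != 0 ->
  Ppoly m y th = \prod_(k < m.+1) ('X^2 + 1 + (- (zval y th k)%:C)%:P * 'X).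
Proof.
move=> y0; rewrite /Ppoly big_add1 /= big_mkord big_ord_recl; congr (_ * _).
  by rewrite mul_XsubC_inv -?rmorphD // -rmorphM divff.
by apply: eq_bigr => k _; rewrite mul_XsubC_inv ?mul_expiN // add_expiN.
Qed.

Lemma Ppoly_expand : y != 0 ->
  Ppoly m y th = \sum_(0 <= r < m.+2)
    ((-1) ^+ r * (esumz m y th r)%:C) *: ('X^r * ('X^2 + 1) ^+ (m.+1 - r)).
Proof.
move=> y0; rewrite Ppoly_prod // prod_add_elem_sym card_ord big_mkord.
apply: eq_bigr => r _; rewrite -mul_polyC esumz_elem_sym.
by rewrite rmorph_elem_sym -elem_symN (rmorph_elem_sym polyC).
Qed.

Lemma coef_Ppoly_odd c : y != 0 ->
  (Ppoly m y th)`_(2 * c + 1) =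
  (- \sum_(0 <= j < c.+1) 'C(m - 2 * j, c - j)%:R * esumz m y th (2 * j + 1))%:C.
Proof.
move=> y0; rewrite Ppoly_expand // (coef_sum_XnM_X2add1_exp c true) => [|r lt_mr].
  rewrite rmorphN rmorph_sum -sumrN; apply: eq_bigr => j _.
  rewrite -signr_odd oddD oddM /= mulN1r mulNrn addn1 subSS rmorphM rmorph_nat.
  by rewrite mulr_natl.
by rewrite esumz_eq0 // rmorph0 mulr0.
Qed.

Lemma coef_Ppoly_even c : y != 0 ->
  (Ppoly m y th)`_(2 * c) =
  (\sum_(0 <= j < c.+1) 'C(m.+1 - 2 * j, c - j)%:R * esumz m y th (2 * j))%:C.
Proof.
move=> y0; rewrite Ppoly_expand // -[(2 * c)%N]addn0.
rewrite (coef_sum_XnM_X2add1_exp c false) => [|r lt_mr].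
  rewrite rmorph_sum; apply: eq_bigr => j _.
  by rewrite addn0 -signr_odd oddM /= mul1r rmorphM rmorph_nat mulr_natl.
by rewrite esumz_eq0 // rmorph0 mulr0.
Qed.

End Ppoly.

Theorem lemma1 (R : realType) (m : nat) (H y : R) (th : nat -> R) :
  (1 <= m)%N -> 1 < H -> 1 < y -> y <= H ->
  (forall k, (1 <= k <= m)%N -> 0 <= th k <= pi) ->
  forall i : nat, (1 <= i <= m./2.+1)%N ->
    acoef m y th (2 * i - 1) =
      (- \sum_(0 <= j < i) ('C(m - 2 * j, i - j - 1))%:R * esumz m y th (2 * j + 1))%:C
    /\
    acoef m y th (2 * i) =
      (\sum_(0 <= j < i.+1) ('C(m.+1 - 2 * j, i - j))%:R * esumz m y th (2 * j))%:C.
Proof.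
move=> _ _ y_gt1 _ _ i /andP[i_gt0 le_i_half].
have y0 : y != 0 by rewrite gt_eqF // (lt_trans ltr01 y_gt1).
have le_2i : (2 * i <= m + 2)%N.
  by move: le_i_half; have := odd_double_half m; case: (odd m) => /= ?; lia.
split.
  rewrite /acoef ifT; last by lia.
  have -> : (2 * m + 2 - (2 * i - 1) = 2 * (m.+1 - i) + 1)%N by lia.
  rewrite coef_Ppoly_odd // (sum_bin_reflect (b := i.-1)).
  - rewrite prednK //; congr (- _)%:C; apply: eq_bigr => j _.
    by rewrite subnAC subn1.
  - lia.
  - by move=> j lt_m_2j; rewrite esumz_eq0 // addn1 ltnS.
have [le_2i_m|lt_m_2i] := leqP (2 * i) m.+1.
  rewrite /acoef ifT //; have -> : (2 * m + 2 - 2 * i = 2 * (m.+1 - i))%N by lia.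
  rewrite coef_Ppoly_even // (sum_bin_reflect (b := i)) //; first lia.
  by move=> j lt_m_2j; rewrite esumz_eq0.
rewrite /acoef leqNgt lt_m_2i /=.
have -> : (2 * m + 2 - (2 * m + 2 - 2 * i) = 2 * i)%N by lia.
exact: coef_Ppoly_even.
Qed.
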